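(* Consider $n$ flows sharing a server that performs interleaved weighted round robin (IWRR) with positive integer weights $w_1,\dots,w_n$, and fix a flow of interest $f_i$. Then for every backlogged period $(s,t]$ of $f_i$ and every $j\neq i$, \[ \frac{D_i(s,t)}{w_i l_i^{\min}} \;\geq\; \frac{\big[D_j(s,t)-\big([w_j-w_i]^++1\big)l_j^{\max}\big]^+}{(w_j+w_i)\,l_j^{\max}}. \] That is, IWRR is a bandwidth-sharing policy for $f_i$ with weights $\phi_i''=w_i l_i^{\min}$, $\phi_j''=(w_j+w_i)l_j^{\max}$ ($j\neq i$) and penalty terms $H_{ij}''=([w_j-w_i]^++1)\,l_j^{\max}\,\mathbb{1}_{\{i\neq j\}}$.
   Context: Each flow $f_k$ sends packets with sizes in $[l_k^{\min},l_k^{\max}]$, $0<l_k^{\min}\le l_k^{\max}$, queued FIFO in a per-flow queue. IWRR: let $w_{\max}=\max_k w_k$. The server runs rounds forever; each round consists of cycles $c=1,\dots,w_{\max}$; in cycle $c$ the server visits flows $k=1,\dots,n$ in order and, if queue $k$ is nonempty and $c\le w_k$, transmits (non-preemptively) exactly one packet from the head of queue $k$. $D_k(t)$ is the cumulative data of flow $k$ that has left the server in $[0,t)$, $A_k(t)$ the cumulative arrivals, $D_k\le A_k$, $D_k(s,t):=D_k(t)-D_k(s)$. An interval $(s,t]$ is a backlogged period of $f_i$ if $D_i(\tau)<A_i(\tau)$ for all $\tau\in(s,t]$. $[x]^+:=\max\{x,0\}$. A server has a bandwidth-sharing policy if there exist weights $\phi_k>0$ and numbers $H_{ij}\ge0$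 such that for every backlogged period $(s,t]$ of $f_i$ and all $j\neq i$: $D_i(s,t)/\phi_i\ge[D_j(s,t)-H_{ij}]^+/\phi_j$. *)

From HB Require Import structures.
From mathcomp Require Import all_boot all_order all_algebra.
From mathcomp Require Import boolp.
Set Implicit Arguments. Unset Strict Implicit. Unset Printing Implicit Defensive.
Import Order.TTheory GRing.Theory Num.Theory.
Local Open Scope ring_scope.

Definition pos_part {R : realFieldType} (x : R) : R := Num.max x 0.

(* Sum of x m over the (finitely many) m with P m; 0 if infinitely many
   (never happens under the hypotheses of the theorem). Any bound N beyond
   which P is false gives the same value. *)
Definition cumsum {R : realFieldType} (P : nat -> bool) (x : nat -> R) : R :=
  match pselect (exists N : nat, forall m : nat, (N <= m)%N -> ~~ P m) with
  | left h => \sum_(m < projT1 (cid h) | P m) x m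
  | right _ => 0
  end.

(* Arrival time of a packet: [Some a] = arrives at time a, [None] = never
   arrives (allows flows with finitely many packets). *)
Definition arrived_lt {R : realFieldType} (a : option R) (t : R) : bool :=
  if a is Some x then x < t else false.
Definition arrived_le {R : realFieldType} (a : option R) (t : R) : bool :=
  if a is Some x then x <= t else false.

(* Server visits are numbered v = 0,1,2,...; visit v is to flow (v %% n)
   (0-indexed) in cycle ((v %/ n) %% wmax) + 1 of round v %/ (n * wmax). *)
Definition wmax (n : nat) (w : 'I_n -> nat) : nat := \max_(k : 'I_n) w k.

(* number of packets of flow k transmitted by the visits before visit v;
   by FIFO, visit v (if it transmits for flow k) sends packet number
   [sent n trans k v] of flow k (0-indexed) *)
Definition sent (n : nat) (trans : nat -> bool) (k : nat) (v : nat) : nat :=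
  count (fun u => trans u && (u %% n == k)%N) (iota 0 v).

Definition Arr {R : realFieldType} (n : nat) (arr : 'I_n -> nat -> option R)
  (len : 'I_n -> nat -> R) (k : 'I_n) (t : R) : R :=
  cumsum (fun m => arrived_lt (arr k m) t) (len k).

(* D_k(t): cumulative data of flow k that has left the server in [0,t):
   the packet sent at visit u leaves at the end [fin u] of its transmission *)
Definition Dep {R : realFieldType} (n : nat) (len : 'I_n -> nat -> R)
  (trans : nat -> bool) (fin : nat -> R) (k : 'I_n) (t : R) : R :=
  cumsum (fun u => [&& trans u, (u %% n == k)%N & fin u < t])
         (fun u => len k (sent n trans k u)).

Definition arrivals_ok {R : realFieldType} (n : nat) (lmin lmax : 'I_n -> R)
  (arr : 'I_n -> nat -> option R) (len : 'I_n -> nat -> R) : Prop :=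
  [/\ forall k, 0 < lmin k /\ lmin k <= lmax k,
      forall k m, lmin k <= len k m <= lmax k,
      forall k m a, arr k m = Some a -> 0 <= a,
      forall k m a', arr k m.+1 = Some a' ->
        exists2 a, arr k m = Some a & a <= a'
    & forall k (t : R), exists N : nat, forall m, (N <= m)%N ->
        ~~ arrived_lt (arr k m) t].

(* An IWRR execution: visit v starts at time tau v; if it transmits
   (trans v), the (non-preemptive) transmission ends at fin v and the next
   visit is not before fin v. Visit v to flow k in cycle c transmits exactly one packet
   (the head of queue k) iff c <= w k and queue k is nonempty at time tau v. *)
Definition iwrr_exec {R : realFieldType} (n : nat) (w : 'I_n -> nat)
  (arr : 'I_n -> nat -> option R)
  (tau fin : nat -> R) (trans : nat -> bool) : Prop :=
  [/\ 0 <= tau 0%N,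
      forall v, if trans v then tau v < fin v /\ fin v <= tau v.+1
                else tau v <= tau v.+1,
      forall t : R, exists v, t <= tau v
    & forall v (k : 'I_n), (v %% n)%N = k ->
        trans v = ((v %/ n) %% wmax w < w k)%N
                  && arrived_le (arr k (sent n trans k v)) (tau v)].

Definition backlogged {R : realFieldType} (A D : R -> R) (s t : R) : Prop :=
  forall tau, s < tau <= t -> D tau < A tau.

(* Let the first and last packets of f_j departing in [s, t) be sent in cycles
   qa and qb (counting cycles globally).  Flow j transmits at most once per
   cycle, and only in cycles whose position in the round is below w_j; while
   f_i is backlogged, every visit to f_i in a cycle whose position is below
   w_i transmits, and all such visits strictly between the two j-packets
   depart in [s, t).  In any window of consecutive cycles the positions below
   w_j exceed those below w_i by at most w_j - w_i per started round, which
   gives w_i (K_j - [w_j - w_i]^+ - 1) <= (w_i + w_j) K_i for the packet counts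
   K_i, K_j; multiplying by the packet-size bounds yields the theorem. *)

From HB Require Import structures.
From mathcomp Require Import all_boot all_order all_algebra.
From mathcomp Require Import boolp zify lra.
Import Order.TTheory GRing.Theory Num.Theory.

Definition phase_in (W lo hi g : nat) : bool := lo <= g %% W < hi.

Lemma count_iota_range lo hi m :
  count (fun g => lo <= g < hi) (iota 0 m) = minn m hi - lo.
Proof.
elim: m => [|m IH]; first by rewrite min0n.
rewrite -addn1 iotaD count_cat IH /= add0n.
by case: (leqP lo m) => h1; case: (ltnP m hi) => h2 /=; lia.
Qed.

Lemma count_phase_period {W} lo hi x : 0 < W -> hi <= W ->
  count (phase_in W lo hi) (iota x W) = hi - lo.
Proof.
move=> W_gt0 hi_le; elim: x => [|x IH].
  rewrite (@eq_in_count _ _ (fun g => lo <= g < hi)); last first.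
    by move=> g; rewrite mem_iota add0n => /andP[_ g_lt]; rewrite /phase_in modn_small.
  by rewrite count_iota_range (minn_idPr hi_le).
case: W W_gt0 hi_le IH => [//|W] _ _ <-.
have -> : iota x.+1 W.+1 = iota x.+1 W ++ [:: x.+1 + W] by rewrite -[W.+1]addn1 iotaD.
by rewrite count_cat /= /phase_in addSnnS modnDr addn0 addnC.
Qed.

Lemma count_phase_periods W lo hi x q : 0 < W -> hi <= W ->
  count (phase_in W lo hi) (iota x (q * W)) = q * (hi - lo).
Proof.
move=> W_gt0 hi_le; elim: q x => [|q IH] x; first by rewrite !mul0n.
by rewrite mulSn iotaD count_cat count_phase_period // IH mulSn.
Qed.

Lemma count_phase_bounds {W} lo hi x L : 0 < W -> hi <= W ->
  (L %/ W) * (hi - lo) <= count (phase_in W lo hi) (iota x L)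
                      <= (L %/ W).+1 * (hi - lo).
Proof.
move=> W_gt0 hi_le.
rewrite [in iota x L](divn_eq L W) iotaD count_cat count_phase_periods //.
set y := x + _; set r := L %% W.
have r_le : r <= W by rewrite ltnW // ltn_mod.
have : count (phase_in W lo hi) (iota y r) <= hi - lo.
  rewrite -(count_phase_period lo hi y W_gt0 hi_le) -(subnKC r_le) iotaD count_cat.
  exact: leq_addr.
by move=> ?; apply/andP; split; lia.
Qed.

Lemma count_phase_weighted {W wi wj} x L : 0 < W -> wi <= W -> wj <= W ->
  wi * (count (phase_in W 0 wj) (iota x L) - (wj - wi))
  <= (wi + wj) * count (phase_in W 0 wi) (iota x L).
Proof.
move=> W_gt0 wi_le wj_le.
set I := count (phase_in W 0 wi) _; set J := count (phase_in W 0 wj) _.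
set D := count (phase_in W wi wj) (iota x L).
have J_le : J <= I + D.
  rewrite -count_predUI; apply: leq_trans (leq_addr _ _).
  by apply: sub_count => g; rewrite /phase_in /= => g_lt; case: ltnP.
have /andP[I_ge _] := count_phase_bounds 0 wi x L W_gt0 wi_le.
have /andP[_ D_le] := count_phase_bounds wi wj x L W_gt0 wj_le.
rewrite subn0 -/I in I_ge; rewrite -/D in D_le.
have : wi * ((L %/ W) * (wj - wi)) <= wj * I.
  by have := leq_mul I_ge (leq_subr wi wj); nia.
nia.
Qed.

Lemma count_iotaS_le (p : pred nat) x L (b : bool) :
  count p (iota x L.+1) <= (count p (iota (x + b) L)).+1.
Proof.
case: b; rewrite ?addn0 ?addn1.
- by rewrite /=; case: (p x).
- by rewrite -addn1 iotaD count_cat /= addn0 -addn1 leq_add2l leq_b1.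
Qed.

Lemma count_le_count_cycles (P p : pred nat) n j N qa qb :
  (forall u, u < N -> P u -> [&& u %% n == j, qa <= u %/ n <= qb & p (u %/ n)]) ->
  count P (iota 0 N) <= count p (iota qa (qb - qa).+1).
Proof.
move=> hP; rewrite -!size_filter -(size_map (fun g => g * n + j) (filter p _)).
apply: uniq_leq_size; first by rewrite filter_uniq ?iota_uniq.
move=> u; rewrite mem_filter mem_iota add0n => /andP[Pu /andP[_ u_lt]].
have /and3P[/eqP u_mod /andP[qa_le le_qb] p_u] := hP u u_lt Pu.
apply/mapP; exists (u %/ n); last by rewrite {1}(divn_eq u n) u_mod.
by rewrite mem_filter mem_iota p_u qa_le /=; lia.
Qed.

Lemma count_cycles_le_count (P p : pred nat) n i N x L : 0 < n ->
  (forall g, x <= g < x + L -> p g -> (g * n + i < N) && P (g * n + i)) ->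
  count p (iota x L) <= count P (iota 0 N).
Proof.
move=> n_gt0 hp; rewrite -!size_filter -(size_map (fun g => g * n + i) (filter p _)).
apply: uniq_leq_size.
  rewrite map_inj_uniq ?filter_uniq ?iota_uniq // => g g' /eqP.
  by rewrite eqn_add2r eqn_pmul2r // => /eqP.
move=> v /mapP[g]; rewrite mem_filter mem_iota => /andP[p_g g_in] ->.
have /andP[lt_N P_g] := hp g g_in p_g.
by rewrite mem_filter mem_iota P_g lt_N.
Qed.

(* Visit g n + i of cycle g lies strictly between visits qa n + j and qb n + j
   exactly for the qb - qa cycles g starting at qa + (i < j). *)
Lemma visit_between (n i j qa qb g : nat) : i < n -> j < n -> i != j ->
  qa + (i < j) <= g < qa + (i < j) + (qb - qa) ->
  qa * n + j < g * n + i < qb * n + j.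
Proof.
move=> i_lt j_lt ij; case: ltnP => [ij_lt|ji_le] /andP[g_ge g_lt];
  rewrite ?addn1 ?addn0 in g_ge g_lt.
- have : qa.+1 * n <= g * n by rewrite leq_mul2r g_ge orbT.
  have : g * n <= qb * n by rewrite leq_mul2r; lia.
  by lia.
- have : qa * n <= g * n by rewrite leq_mul2r g_ge orbT.
  have : g.+1 * n <= qb * n by rewrite leq_mul2r; lia.
  by lia.
Qed.

Local Open Scope ring_scope.

Lemma sum_iota_widen {R : nmodType} (P : pred nat) (x : nat -> R) a b :
  (a <= b)%N -> (forall m, (a <= m)%N -> ~~ P m) ->
  \sum_(m <- iota 0 a | P m) x m = \sum_(m <- iota 0 b | P m) x m.
Proof.
move=> ab hP; rewrite -(subnKC ab) iotaD big_cat /= [X in _ + X]big1_seq ?addr0 //.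
by move=> m /andP[Pm]; rewrite mem_iota => /andP[am _]; rewrite (negbTE (hP _ am)) in Pm.
Qed.

Lemma cumsumE (R : realFieldType) (P : nat -> bool) (x : nat -> R) N :
  (forall m, (N <= m)%N -> ~~ P m) -> cumsum P x = \sum_(m <- iota 0 N | P m) x m.
Proof.
move=> hN; rewrite /cumsum; case: pselect => [h|[]]; last by exists N.
case: (cid h) => /= N' hN'.
rewrite -(big_mkord P) /index_iota subn0.
rewrite (sum_iota_widen P x _ _ (leq_maxr N N') hN').
by rewrite (sum_iota_widen P x _ _ (leq_maxl N N') hN).
Qed.

Lemma ler_sum_count (R : numDomainType) (I : Type) (r : seq I) (P : pred I)
    (F : I -> R) c :
  (forall u, P u -> F u <= c) -> \sum_(u <- r | P u) F u <= (count P r)%:R * c.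
Proof.
move=> F_le; apply: le_trans (ler_sum _ F_le) _.
by rewrite big_const_seq iter_addr_0 mulr_natl.
Qed.

Lemma ger_sum_count (R : numDomainType) (I : Type) (r : seq I) (P : pred I)
    (F : I -> R) c :
  (forall u, P u -> c <= F u) -> (count P r)%:R * c <= \sum_(u <- r | P u) F u.
Proof.
move=> F_ge; apply: le_trans (ler_sum _ F_ge).
by rewrite big_const_seq iter_addr_0 mulr_natl.
Qed.

Lemma ler_sum_pred (R : numDomainType) (I : Type) (r : seq I) (P Q : pred I)
    (F : I -> R) :
  (forall u, P u -> Q u) -> (forall u, 0 <= F u) ->
  \sum_(u <- r | P u) F u <= \sum_(u <- r | Q u) F u.
Proof.
move=> PQ F_ge0; rewrite big_mkcond [X in _ <= X]big_mkcond; apply: ler_sum => u _.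
by case: (boolP (P u)) => [/PQ ->|_] //; case: ifP.
Qed.

Lemma not_arrived_until {R : realFieldType} {a : option R} {x t : R} :
  ~~ arrived_le a x -> x < t -> exists2 T, x < T <= t & ~~ arrived_lt a T.
Proof.
case: a => [a|] /= a_gt x_lt; last by exists t; rewrite ?x_lt ?lexx.
rewrite -ltNge in a_gt; exists (Num.min a t).
  by rewrite lt_min a_gt x_lt ge_min lexx orbT.
by rewrite -leNgt ge_min lexx.
Qed.

Lemma sum_sent_packets (R : nmodType) (len : nat -> R) (trans : nat -> bool) n k v :
  \sum_(u <- iota 0 v | trans u && (u %% n == k)%N) len (sent n trans k u)
  = \sum_(m <- iota 0 (sent n trans k v)) len m.
Proof.
elim: v => [|v IH]; first by rewrite /sent !big_nil.
have sentS : sent n trans k v.+1 = (sent n trans k v + (trans v && (v %% n == k)))%N.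
  by rewrite /sent -addn1 iotaD count_cat /= addn0.
rewrite sentS -addn1 iotaD big_cat /= IH big_cons big_nil.
case: (trans v && (v %% n == k)%N) => /=; last by rewrite addn0 addr0.
by rewrite addr0 iotaD big_cat /= big_cons big_nil addr0.
Qed.

Definition departs_in (n : nat) (trans : nat -> bool) {R : realFieldType}
    (fin : nat -> R) (s t : R) (k u : nat) : bool :=
  [&& trans u, (u %% n == k)%N, s <= fin u & fin u < t].

Section Departures.

Context {R : realFieldType} {n : nat} {len : 'I_n -> nat -> R}
  {trans : nat -> bool} {fin : nat -> R} {N : nat}.

Lemma Dep_iota k T : (forall u, (N <= u)%N -> trans u -> T <= fin u) ->
  Dep len trans fin k T = \sum_(u <- iota 0 N | [&& trans u, (u %% n == k)%N & fin u < T])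
                            len k (sent n trans k u).
Proof.
move=> fin_ge; rewrite /Dep (@cumsumE _ _ _ N) // => u N_le.
by apply/and3P => -[tr_u _]; rewrite ltNge fin_ge.
Qed.

Lemma Dep_sub k s t : s <= t -> (forall u, (N <= u)%N -> trans u -> t <= fin u) ->
  Dep len trans fin k t - Dep len trans fin k s
  = \sum_(u <- iota 0 N | departs_in n trans fin s t k u) len k (sent n trans k u).
Proof.
move=> st fin_ge.
rewrite (Dep_iota k t fin_ge) (Dep_iota k s); last first.
  by move=> u N_le tr_u; apply: le_trans st (fin_ge u N_le tr_u).
rewrite (bigID (fun u => s <= fin u)) /= addrC.
rewrite (eq_bigl (fun u => [&& trans u, (u %% n == k)%N & fin u < s])); last first.
  move=> u; rewrite -ltNge andbC.
  case fin_lt: (fin u < s); last by rewrite !andbF.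
  by rewrite (lt_le_trans fin_lt st) andbT.
rewrite addrAC subrr add0r; apply: eq_bigl => u.
by rewrite /departs_in -!andbA; do !bool_congr.
Qed.

End Departures.

Section Execution.

Context {R : realFieldType} {n : nat} {w : 'I_n -> nat}
  {arr : 'I_n -> nat -> option R} {tau fin : nat -> R} {trans : nat -> bool}.
Hypothesis exec : iwrr_exec w arr tau fin trans.

Lemma tau_lt_fin {u} : trans u -> tau u < fin u.
Proof. by case: exec => _ step _ _ tr_u; have := step u; rewrite tr_u => -[]. Qed.

Lemma tau_nondecr {u v} : (u <= v)%N -> tau u <= tau v.
Proof.
have tau_S x : tau x <= tau x.+1.
  case: exec => _ step _ _; have := step x.
  by case: (trans x) => [[/ltW]|//]; apply: le_trans.
move=> /subnKC <-; elim: (v - u)%N => [|d IH]; first by rewrite addn0.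
by rewrite addnS; apply: le_trans IH (tau_S _).
Qed.

Lemma fin_le_tau {u v} : trans u -> (u < v)%N -> fin u <= tau v.
Proof.
case: exec => _ step _ _ tr_u uv; have := step u; rewrite tr_u => -[_ fin_le].
exact: le_trans fin_le (tau_nondecr uv).
Qed.

Lemma fin_eventually_ge T : exists N, forall u, (N <= u)%N -> trans u -> T <= fin u.
Proof.
case: exec => _ _ unbounded _; have [N T_le] := unbounded T.
exists N => u N_le tr_u.
exact: le_trans T_le (le_trans (tau_nondecr N_le) (ltW (tau_lt_fin tr_u))).
Qed.

Lemma transmits_eligible {v} {k : 'I_n} :
  (v %% n)%N = k -> trans v -> ((v %/ n) %% wmax w < w k)%N.
Proof. by case: exec => _ _ _ visit v_k; rewrite (visit v k v_k) => /andP[]. Qed.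

Lemma count_departs_le_cycles {k : 'I_n} {s t N a b} :
  (forall u, (u < N)%N -> departs_in n trans fin s t k u -> (a <= u <= b)%N) ->
  (count (departs_in n trans fin s t k) (iota 0 N)
   <= count (phase_in (wmax w) 0 (w k)) (iota (a %/ n) (b %/ n - a %/ n).+1))%N.
Proof.
move=> in_ab; apply: (count_le_count_cycles _ _ n k) => u u_lt dep_u.
have /and4P[tr_u /eqP u_k _ _] := dep_u; have /andP[a_le le_b] := in_ab u u_lt dep_u.
by rewrite u_k eqxx !leq_div2r //= /phase_in (transmits_eligible u_k tr_u).
Qed.

End Execution.

Section Arrivals.

Context {R : realFieldType} {n : nat} {lmin lmax : 'I_n -> R}
  {arr : 'I_n -> nat -> option R} {len : 'I_n -> nat -> R}.
Hypothesis arr_ok : arrivals_ok lmin lmax arr len.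

Lemma len_ge0 k m : 0 <= len k m.
Proof.
case: arr_ok => lmin_gt0 len_in _ _ _; have [l_gt0 _] := lmin_gt0 k.
by have /andP[l_le _] := len_in k m; apply: le_trans (ltW l_gt0) l_le.
Qed.

Lemma arrived_lt_fifo k S m T :
  (S <= m)%N -> arrived_lt (arr k m) T -> arrived_lt (arr k S) T.
Proof.
case: arr_ok => _ _ _ fifo _ /subnKC <-; elim: (m - S)%N => [|d IH]; first by rewrite addn0.
rewrite addnS => arrS; apply: IH; move: arrS; rewrite /arrived_lt.
case arr_d: (arr k (S + d).+1) => [a'|//] a'_lt.
by have [a -> a_le] := fifo _ _ _ arr_d; apply: le_lt_trans a_le a'_lt.
Qed.

Lemma Arr_le_sent {k S T} :
  ~~ arrived_lt (arr k S) T -> Arr arr len k T <= \sum_(m <- iota 0 S) len k m.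
Proof.
case: arr_ok => _ _ _ _ finite not_arr; have [N N_ge] := finite k T.
rewrite /Arr (@cumsumE _ _ _ (maxn N S)); last first.
  by move=> m /(leq_trans (leq_maxl _ _)) /N_ge.
rewrite -(filter_iota_ltn 0 (leq_maxr N S)) big_filter.
apply: ler_sum_pred => [m arr_m|m]; last exact: len_ge0.
by rewrite ltnNge; apply: contra not_arr => /arrived_lt_fifo; apply.
Qed.

End Arrivals.

Section Backlog.

Context {R : realFieldType} {n : nat} {w : 'I_n -> nat} {lmin lmax : 'I_n -> R}
  {arr : 'I_n -> nat -> option R} {len : 'I_n -> nat -> R}
  {tau fin : nat -> R} {trans : nat -> bool}.
Hypotheses (exec : iwrr_exec w arr tau fin trans)
  (arr_ok : arrivals_ok lmin lmax arr len).

Lemma sum_sent_le_Dep (k : 'I_n) {v T} : tau v < T ->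
  \sum_(m <- iota 0 (sent n trans k v)) len k m <= Dep len trans fin k T.
Proof.
move=> tau_lt; have [N N_ge] := fin_eventually_ge exec T.
rewrite (@Dep_iota _ _ len trans fin (maxn N v) k T); last first.
  by move=> u /(leq_trans (leq_maxl _ _)) /N_ge.
rewrite -sum_sent_packets -(filter_iota_ltn 0 (leq_maxr N v)) big_filter_cond.
apply: ler_sum_pred => [u /and3P[u_lt tr_u k_u] | u].
  by rewrite tr_u k_u (le_lt_trans (fin_le_tau exec tr_u u_lt) tau_lt).
exact: len_ge0 arr_ok k (sent n trans k u).
Qed.

Context {i : 'I_n} {s t : R}.
Hypothesis backlog : backlogged (Arr arr len i) (Dep len trans fin i) s t.

Lemma backlogged_transmits v : (v %% n)%N = i -> ((v %/ n) %% wmax w < w i)%N ->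
  s <= tau v -> tau v < t -> trans v.
Proof.
case: exec => _ _ _ visit v_i elig s_le lt_t.
rewrite (visit v i v_i) elig /=; apply/negPn/negP => not_arr.
have [T /andP[tau_lt T_le] not_arrT] := not_arrived_until not_arr lt_t.
have : Dep len trans fin i T < Arr arr len i T.
  by apply: backlog; rewrite (le_lt_trans s_le tau_lt) T_le.
by rewrite ltNge (le_trans (Arr_le_sent arr_ok not_arrT) (sum_sent_le_Dep i tau_lt)).
Qed.

Lemma departs_between (j : nat) a b v : (a < v < b)%N ->
  departs_in n trans fin s t j a -> departs_in n trans fin s t j b ->
  (v %% n)%N = i -> ((v %/ n) %% wmax w < w i)%N -> departs_in n trans fin s t i v.
Proof.
move=> /andP[av vb] /and4P[tr_a _ s_le _] /and4P[tr_b _ _ lt_t] v_i elig.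
have tau_b_lt : tau b < t := lt_trans (tau_lt_fin exec tr_b) lt_t.
have s_le_v : s <= tau v := le_trans s_le (fin_le_tau exec tr_a av).
have v_lt_t : tau v < t := le_lt_trans (tau_nondecr exec (ltnW vb)) tau_b_lt.
have tr_v := backlogged_transmits v v_i elig s_le_v v_lt_t.
rewrite /departs_in tr_v v_i eqxx (le_trans s_le_v (ltW (tau_lt_fin exec tr_v))) /=.
exact: le_lt_trans (fin_le_tau exec tr_v vb) tau_b_lt.
Qed.

Lemma count_phase_le_departs {j : 'I_n} {a b N} : j != i -> (b < N)%N ->
  departs_in n trans fin s t j a -> departs_in n trans fin s t j b ->
  (count (phase_in (wmax w) 0 (w i)) (iota (a %/ n + (i < j)) (b %/ n - a %/ n))
   <= count (departs_in n trans fin s t i) (iota 0 N))%N.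
Proof.
move=> ji b_lt dep_a dep_b.
have n_gt0 : (0 < n)%N := leq_ltn_trans (leq0n i) (ltn_ord i).
have mod_j u : departs_in n trans fin s t j u -> (u %% n = j)%N by case/and4P=> _ /eqP.
apply: (count_cycles_le_count _ _ n i _ _ _ n_gt0) => g g_in phase_g.
have v_mod : ((g * n + i) %% n = i)%N by rewrite modnMDl modn_small.
have v_div : ((g * n + i) %/ n = g)%N by rewrite divnMDl // divn_small ?addn0.
have v_in : (a < g * n + i < b)%N.
  rewrite {1}(divn_eq a n) {1}(divn_eq b n) (mod_j a dep_a) (mod_j b dep_b).
  by apply: visit_between; rewrite // eq_sym.
rewrite (ltn_trans _ b_lt); last by case/andP: v_in.
by apply: departs_between v_in dep_a dep_b v_mod _; rewrite v_div.
Qed.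

Lemma count_departs_balance (j : 'I_n) N : (forall k, 0 < w k)%N -> j != i ->
  (w i * (count (departs_in n trans fin s t j) (iota 0 N) - (w j - w i).+1)
   <= (w i + w j) * count (departs_in n trans fin s t i) (iota 0 N))%N.
Proof.
move=> w_gt0 ji; set Kj := count _ _; set Ki := count _ _.
have [->|Kj_gt0] := posnP Kj; first by rewrite sub0n muln0.
have ex_j : exists u, (u < N)%N && departs_in n trans fin s t j u.
  move: Kj_gt0; rewrite -has_count => /hasP[u]; rewrite mem_iota => /andP[_ u_lt] dep_u.
  by exists u; rewrite u_lt.
have [a /andP[_ dep_a] a_min] := ex_minnP ex_j.
have le_N u : (u < N)%N && departs_in n trans fin s t j u -> (u <= N)%N.
  by case/andP=> /ltnW.
have [b /andP[b_lt dep_b] b_max] := ex_maxnP ex_j le_N.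
have in_ab u : (u < N)%N -> departs_in n trans fin s t j u -> (a <= u <= b)%N.
  by move=> u_lt dep_u; rewrite a_min ?b_max // u_lt.
pose W := wmax w; have w_le k : (w k <= W)%N by apply: leq_bigmax.
have W_gt0 : (0 < W)%N := leq_trans (w_gt0 i) (w_le i).
set qa := (a %/ n)%N; set qb := (b %/ n)%N; set x := (qa + (i < j))%N.
have Kj_le : (Kj <= (count (phase_in W 0 (w j)) (iota x (qb - qa))).+1)%N.
  apply: leq_trans (count_iotaS_le _ _ _ _).
  by have := count_departs_le_cycles exec in_ab.
have Ki_ge : (count (phase_in W 0 (w i)) (iota x (qb - qa)) <= Ki)%N.
  by have := count_phase_le_departs ji b_lt dep_a dep_b.
have weighted := count_phase_weighted x (qb - qa) W_gt0 (w_le i) (w_le j).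
set J := count (phase_in W 0 (w j)) _ in Kj_le weighted.
have Kj_sub : (Kj - (w j - w i).+1 <= J - (w j - w i))%N by lia.
apply: leq_trans (leq_mul (leqnn _) Kj_sub) _.
exact: leq_trans weighted (leq_mul (leqnn _) Ki_ge).
Qed.

End Backlog.

Lemma pos_part_natrB (R : realFieldType) (m k : nat) :
  pos_part (m%:R - k%:R : R) = (m - k)%N%:R.
Proof.
rewrite /pos_part; case: (leqP k m) => [km|mk].
  by rewrite natrB // max_l // subr_ge0 ler_nat.
by rewrite (eqP (ltnW mk : (m - k == 0)%N)) max_r // subr_le0 ler_nat ltnW.
Qed.

Lemma share_ratio_le {R : realFieldType} {wi wj Ki Kj : nat} {li lj Di Dj : R} :
  (0 < wi)%N -> 0 < li -> 0 < lj -> Ki%:R * li <= Di -> Dj <= Kj%:R * lj ->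
  (wi * (Kj - (wj - wi).+1) <= (wi + wj) * Ki)%N ->
  pos_part (Dj - (pos_part (wj%:R - wi%:R) + 1) * lj) / ((wj + wi)%N%:R * lj)
  <= Di / (wi%:R * li).
Proof.
move=> wi_gt0 li_gt0 lj_gt0 Di_ge Dj_le balance.
rewrite pos_part_natrB natr1; set c := (wj - wi).+1.
have Di_ge0 : 0 <= Di := le_trans (mulr_ge0 (ler0n _ _) (ltW li_gt0)) Di_ge.
have wi_li_gt0 : 0 < wi%:R * li by rewrite mulr_gt0 ?ltr0n.
rewrite /pos_part; have [_|X_gt0] := leP (Dj - c%:R * lj) 0.
  by rewrite mul0r divr_ge0 // ltW.
have c_lt : (c < Kj)%N.
  by rewrite -(ltr_nat R) -(ltr_pM2r lj_gt0); apply: lt_le_trans Dj_le; rewrite -subr_gt0.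
move: balance; rewrite -(ler_nat R) !natrM natrB ?(ltnW c_lt) // natrD => balance.
have A_gt0 : 0 < (wj + wi)%:R * lj by rewrite mulr_gt0 // ltr0n addn_gt0 wi_gt0 orbT.
rewrite ler_pdivrMr // mulrAC ler_pdivlMr // natrD.
rewrite -/c in balance.
(* (Dj - c lj) wi li <= (Kj - c) lj wi li <= (wi + wj) Ki li lj <= Di (wj + wi) lj *)
have := mulr_ge0 (ltW li_gt0) (ltW lj_gt0); nra.
Qed.

Theorem mainTheorem3 (R : realFieldType) (n : nat) (w : 'I_n -> nat)
  (lmin lmax : 'I_n -> R) (arr : 'I_n -> nat -> option R)
  (len : 'I_n -> nat -> R) (tau fin : nat -> R) (trans : nat -> bool)
  (i j : 'I_n) (s t : R) :
  (forall k, (0 < w k)%N) ->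
  arrivals_ok lmin lmax arr len ->
  iwrr_exec w arr tau fin trans ->
  j != i ->
  s <= t ->
  backlogged (Arr arr len i) (Dep len trans fin i) s t ->
  (Dep len trans fin i t - Dep len trans fin i s) / ((w i)%:R * lmin i)
  >= pos_part (Dep len trans fin j t - Dep len trans fin j s
               - (pos_part ((w j)%:R - (w i)%:R) + 1) * lmax j)
     / (((w j + w i)%N)%:R * lmax j).
Proof.
move=> w_gt0 arr_ok exec ji st backlog.
have [N N_ge] := fin_eventually_ge exec t.
rewrite !(Dep_sub _ _ _ st N_ge).
have [lmin_gt0 len_in _ _ _] := arr_ok.
have [li_gt0 _] := lmin_gt0 i; have [lj_gt0 lj_le] := lmin_gt0 j.
apply: share_ratio_le (w_gt0 i) li_gt0 (lt_le_trans lj_gt0 lj_le) _ _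
  (count_departs_balance exec arr_ok backlog j N w_gt0 ji).
- by apply: ger_sum_count => u _; case/andP: (len_in i (sent n trans i u)).
- by apply: ler_sum_count => u _; case/andP: (len_in j (sent n trans j u)).
Qed.
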